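(* Let $K\ge2$, $\varepsilon\in(0,1]$ and $T\ge 3K/32$. In prediction with limited advice with one additional observation per round, for every (possibly randomized) learning algorithm there exists an oblivious loss sequence with losses in $[0,1]$ and effective loss range at most $\varepsilon$ such that the expected regret satisfies $\mathcal{R}_T\ge 0.02\,\varepsilon\sqrt{KT}$; that is, $\inf\sup\mathcal R_T\ge 0.02\varepsilon\sqrt{KT}$, with the infimum over algorithms and the supremum over such oblivious loss sequences.
   Context: Setting: there are $K$ arms, $[K]=\{1,\dots,K\}$, and losses $\ell_t^a\in[0,1]$. In each round $t$ the learner picks a primary arm $A_t\in[K]$, suffers and observes $\ell_t^{A_t}$, and additionally picks a secondary arm $B_t$ and observes, but does not suffer, $\ell_t^{B_t}$; choices may depend on all past observations and internal randomization. An oblivious adversary fixes all losses before the game starts. The effective loss range is the smallest $\varepsilon$ such that $|\ell_t^a-\ell_t^{a'}|\le\varepsilon$ for all $t\le T$ and $a,a'\in[K]$. The expected regret is $\mathcal{R}_T=\mathbb{E}[\sum_{t=1}^T\ell_t^{A_t}]-\min_{a\in[K]}\mathbb{E}[\sum_{t=1}^T\ell_t^a]$. *)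

From Stdlib Require Import Reals List.
Import ListNotations.
Open Scope R_scope.

(* Arms are the naturals 0 .. K-1 (i.e. [K] shifted by one);
   rounds are t = 0 .. T-1.  A loss sequence is L t a = loss of arm a at round t. *)

Fixpoint sumR (n : nat) (f : nat -> R) : R :=
  match n with
  | O => 0
  | S m => sumR m f + f m
  end.

(* minR n f = min (f 0, ..., f n)  (n+1 values) *)
Fixpoint minR (n : nat) (f : nat -> R) : R :=
  match n with
  | O => f O
  | S m => Rmin (minR m f) (f (S m))
  end.

(* One round's observation: (A_t, loss of A_t, B_t, loss of B_t). *)
Definition obs : Type := (nat * R * nat * R)%type.
Definition history : Type := list obs.

(* A (possibly randomized) learning algorithm, as a behavioural strategy:
   - prim h a   : probability of choosing primary arm a given past observations h;
   - sec h a l b: probability of choosing secondary arm b given past observations h,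
                  the primary arm a of the current round and its observed loss l. *)
Record algorithm : Type := {
  prim : history -> nat -> R;
  sec  : history -> nat -> R -> nat -> R
}.

Definition valid_algorithm (K : nat) (alg : algorithm) : Prop :=
  (forall h a, (a < K)%nat -> 0 <= prim alg h a) /\
  (forall h, sumR K (prim alg h) = 1) /\
  (forall h a l b, (b < K)%nat -> 0 <= sec alg h a l b) /\
  (forall h a l, sumR K (sec alg h a l) = 1).

Fixpoint exp_loss_from (K : nat) (alg : algorithm) (L : nat -> nat -> R)
         (n t : nat) (h : history) : R :=
  match n with
  | O => 0
  | S m =>
      sumR K (fun a =>
        prim alg h a *
        (L t a +
         sumR K (fun b =>
           sec alg h a (L t a) b *
           exp_loss_from K alg L m (S t) (h ++ [(a, L t a, b, L t b)]))))
  end.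

Definition exp_loss (K T : nat) (alg : algorithm) (L : nat -> nat -> R) : R :=
  exp_loss_from K alg L T 0 [].

Definition cum_loss (T : nat) (L : nat -> nat -> R) (a : nat) : R :=
  sumR T (fun t => L t a).

Definition regret (K T : nat) (alg : algorithm) (L : nat -> nat -> R) : R :=
  exp_loss K T alg L - minR (K - 1) (cum_loss T L).

Definition losses_in_01 (K T : nat) (L : nat -> nat -> R) : Prop :=
  forall t a, (t < T)%nat -> (a < K)%nat -> 0 <= L t a <= 1.

Definition eff_range_le (K T : nat) (L : nat -> nat -> R) (eps : R) : Prop :=
  forall t a a', (t < T)%nat -> (a < K)%nat -> (a' < K)%nat ->
    Rabs (L t a - L t a') <= eps.

(* Play the algorithm against random tables with losses in {0, eps}.  Under the
   reference model every loss bit is a fair coin; under model j arm j is better,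
   with loss eps only with probability (1 - gam)/2, so every round in which j is
   not the primary arm costs eps gam / 2 in expectation.  Let N_j count the
   primary plays of j and O_j the rounds in which j is observed.  The Bhattacharyya
   affinity of the laws of the play under model j and under the reference model
   is at least exp (- gam^2 E_0[O_j] / 2), and Cauchy-Schwarz turns this into
   E_j[N_j] <= E_0[N_j] + T gam sqrt (E_0[O_j]).  Since sum_j E_0[N_j] = T and
   sum_j E_0[O_j] <= 2T, averaging over j leaves an expected regret of order
   eps gam (T - T/K - T gam sqrt (2KT)/K); gam = sqrt (KT) / (6T) gives
   0.02 eps sqrt (KT), attained by some model j and then by some fixed table. *)

From Stdlib Require Import Reals List Lra Lia Psatz.
Import ListNotations.
Open Scope R_scope.

Lemma sumR_ext n f g : (forall i, (i < n)%nat -> f i = g i) -> sumR n f = sumR n g.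
Proof.
  induction n as [|n IH]; intros H; simpl; [reflexivity|].
  rewrite IH by (intros; apply H; lia). rewrite H by lia. reflexivity.
Qed.

Lemma sumR_add n f g : sumR n (fun i => f i + g i) = sumR n f + sumR n g.
Proof. induction n as [|n IH]; simpl; [|rewrite IH]; ring. Qed.

Lemma sumR_scal n c f : sumR n (fun i => c * f i) = c * sumR n f.
Proof. induction n as [|n IH]; simpl; [|rewrite IH]; ring. Qed.

Lemma sumR_const n c : sumR n (fun _ => c) = INR n * c.
Proof. induction n as [|n IH]; [simpl; ring|]. rewrite S_INR; simpl; rewrite IH; ring. Qed.

Lemma sumR_le n f g : (forall i, (i < n)%nat -> f i <= g i) -> sumR n f <= sumR n g.
Proof.
  induction n as [|n IH]; intros H; simpl; [lra|].
  apply Rplus_le_compat; [apply IH; intros; apply H|apply H]; lia.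
Qed.

Lemma sumR_nonneg n f : (forall i, (i < n)%nat -> 0 <= f i) -> 0 <= sumR n f.
Proof. intros H. rewrite <- (Rmult_0_r (INR n)), <- sumR_const. now apply sumR_le. Qed.

Lemma sumR_indicator n j c :
  (j < n)%nat -> sumR n (fun i => if Nat.eqb i j then c else 0) = c.
Proof.
  induction n as [|n IH]; intros Hj; simpl; [lia|].
  destruct (Nat.eqb_spec n j) as [->|Hn].
  - rewrite (sumR_ext _ _ (fun _ => 0)), sumR_const; [ring|].
    intros i Hi. destruct (Nat.eqb_spec i j); [lia|reflexivity].
  - rewrite IH by lia. ring.
Qed.

Lemma sumR_sqr_le n f : (sumR n f) ^ 2 <= INR n * sumR n (fun i => f i ^ 2).
Proof.
  induction n as [|n IH]; [simpl; lra|].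
  rewrite S_INR; cbn [sumR].
  destruct (Nat.eq_dec n 0) as [->|Hn]; [simpl; lra|].
  set (s := sumR n f) in *; set (q := sumR n (fun i => f i ^ 2)) in *.
  set (y := f n); set (k := INR n) in *.
  assert (Hk : 0 < k) by (apply lt_0_INR; lia).
  (* 2 s y <= s^2/k + k y^2, and s^2/k <= q by induction *)
  assert (0 <= (s / k - y) ^ 2 * k) by (apply Rmult_le_pos; [apply pow2_ge_0|lra]).
  replace ((s / k - y) ^ 2 * k) with (s ^ 2 / k - 2 * s * y + k * y ^ 2) in H by (field; lra).
  assert (s ^ 2 / k <= q).
  { apply Rmult_le_reg_r with k; [exact Hk|]. replace (s ^ 2 / k * k) with (s ^ 2) by (field; lra). lra. }
  nra.
Qed.

Lemma sumR_exists_ge n f B : (0 < n)%nat ->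
  INR n * B <= sumR n f -> exists i, (i < n)%nat /\ B <= f i.
Proof.
  intros Hn. induction n as [|n IH]; intros H; [lia|].
  destruct (Rle_or_lt B (f n)) as [Hb|Hb]; [exists n; split; [lia|exact Hb]|].
  destruct (Nat.eq_dec n 0) as [->|Hn0]; [simpl in H; lra|].
  destruct IH as [i [Hi Hfi]]; [lia|rewrite S_INR in H; simpl in H; lra|].
  exists i; split; [lia|exact Hfi].
Qed.

Lemma minR_le n f i : (i <= n)%nat -> minR n f <= f i.
Proof.
  induction n as [|n IH]; intros Hi; simpl.
  - replace i with 0%nat by lia. lra.
  - destruct (Nat.eq_dec i (S n)) as [->|Hne]; [apply Rmin_r|].
    eapply Rle_trans; [apply Rmin_l|apply IH; lia].
Qed.

Definition sum_bool (g : bool -> R) : R := g true + g false.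

Lemma sum_bool_ext f g : (forall z, f z = g z) -> sum_bool f = sum_bool g.
Proof. intros H; unfold sum_bool; now rewrite !H. Qed.

Lemma sum_bool_add f g : sum_bool (fun z => f z + g z) = sum_bool f + sum_bool g.
Proof. unfold sum_bool; ring. Qed.

Lemma sum_bool_scal c g : sum_bool (fun z => c * g z) = c * sum_bool g.
Proof. unfold sum_bool; ring. Qed.

Lemma sum_bool_le f g : (forall z, f z <= g z) -> sum_bool f <= sum_bool g.
Proof. intros H; unfold sum_bool; apply Rplus_le_compat; apply H. Qed.

Lemma sumR_sum_bool n g :
  sumR n (fun i => sum_bool (g i)) = sum_bool (fun z => sumR n (fun i => g i z)).
Proof. apply sumR_add. Qed.

Lemma sqr_le_of_quadratic_nonneg A B C :
  0 <= C -> (forall l, 0 <= A - 2 * l * B + l ^ 2 * C) -> B ^ 2 <= A * C.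
Proof.
  intros HC H. destruct (Req_dec C 0) as [->|HC0].
  - destruct (Req_dec B 0) as [->|HB]; [lra|].
    specialize (H ((A + 1) / (2 * B))).
    replace (A - 2 * ((A + 1) / (2 * B)) * B + ((A + 1) / (2 * B)) ^ 2 * 0) with (-1) in H by (field; auto).
    lra.
  - specialize (H (B / C)).
    replace (A - 2 * (B / C) * B + (B / C) ^ 2 * C) with (A - B ^ 2 / C) in H by (field; auto).
    apply Rmult_le_reg_r with (/ C); [apply Rinv_0_lt_compat; lra|].
    replace (A * C * / C) with A by (field; lra). unfold Rdiv in H. lra.
Qed.

Section Game.

Variable K : nat.
Variable alg : algorithm.
Variables eps gam : R.
Hypothesis alg_valid : valid_algorithm K alg.
Hypothesis eps_nonneg : 0 <= eps.
Hypothesis gam_range : 0 <= gam < 1.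

(* The hard instances: each loss is [eps] or [0], read off a bit ([true] means
   loss [eps]); all bits are independent.  Under [None] every bit is a fair coin;
   under [Some j] arm [j] is better, its bit being [true] with probability
   [(1 - gam) / 2]. *)
Definition model : Type := option nat.

Definition coin (e : model) (a : nat) (z : bool) : R :=
  match e with
  | Some j => if Nat.eqb a j then (if z then (1 - gam) / 2 else (1 + gam) / 2) else / 2
  | None => / 2
  end.

Definition bit_loss (z : bool) : R := if z then eps else 0.

Definition pair_law (e : model) (a b : nat) (z z' : bool) : R :=
  if Nat.eqb a b then (if Bool.eqb z z' then coin e a z else 0)
  else coin e a z * coin e b z'.

(* Clamped at [0], so that weights are nonnegative also on arms [>= K], about
   which [valid_algorithm] says nothing. *)
Definition prim_w (h : history) (a : nat) : R := Rmax 0 (prim alg h a).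
Definition sec_w (h : history) (a : nat) (l : R) (b : nat) : R := Rmax 0 (sec alg h a l b).

Definition weight (e : model) (h : history) (a b : nat) (z z' : bool) : R :=
  prim_w h a * sec_w h a (bit_loss z) b * pair_law e a b z z'.

Definition observe (a b : nat) (z z' : bool) : obs := (a, bit_loss z, b, bit_loss z').

(* A reward of one round, as a function of the primary and secondary arms and
   of their loss bits. *)
Definition reward : Type := nat -> nat -> bool -> bool -> R.

Definition sum_step (F : reward) : R :=
  sumR K (fun a => sumR K (fun b => sum_bool (fun z => sum_bool (fun z' => F a b z z')))).

Definition step_mean (e : model) (h : history) (F : reward) : R :=
  sum_step (fun a b z z' => weight e h a b z z' * F a b z z').

Fixpoint cum_mean (e : model) (r : reward) (n : nat) (h : history) : R :=
  match n with
  | O => 0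
  | S m => step_mean e h (fun a b z z' => r a b z z' + cum_mean e r m (h ++ [observe a b z z']))
  end.

Lemma coin_nonneg e a z : 0 <= coin e a z.
Proof. unfold coin; destruct e; [destruct (Nat.eqb a n); [destruct z|]|]; lra. Qed.

Lemma coin_sum e a : coin e a true + coin e a false = 1.
Proof. unfold coin; destruct e; [destruct (Nat.eqb a n)|]; lra. Qed.

Lemma pair_law_nonneg e a b z z' : 0 <= pair_law e a b z z'.
Proof.
  unfold pair_law. destruct (Nat.eqb a b); [destruct (Bool.eqb z z'); [apply coin_nonneg|lra]|].
  apply Rmult_le_pos; apply coin_nonneg.
Qed.

Lemma pair_law_marginal e a b z : sum_bool (fun z' => pair_law e a b z z') = coin e a z.
Proof.
  unfold sum_bool, pair_law. destruct (Nat.eqb a b); [destruct z; simpl; ring|].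
  rewrite <- Rmult_plus_distr_l, coin_sum. ring.
Qed.

Lemma prim_w_eq h a : (a < K)%nat -> prim_w h a = prim alg h a.
Proof. intros Ha. apply Rmax_right, (proj1 alg_valid), Ha. Qed.

Lemma sec_w_eq h a l b : (b < K)%nat -> sec_w h a l b = sec alg h a l b.
Proof. intros Hb. apply Rmax_right, (proj1 (proj2 (proj2 alg_valid))), Hb. Qed.

Lemma prim_w_sum h : sumR K (prim_w h) = 1.
Proof. rewrite <- (proj1 (proj2 alg_valid) h). apply sumR_ext, prim_w_eq. Qed.

Lemma sec_w_sum h a l : sumR K (sec_w h a l) = 1.
Proof. rewrite <- (proj2 (proj2 (proj2 alg_valid)) h a l). apply sumR_ext; intros. now apply sec_w_eq. Qed.

Lemma weight_nonneg e h a b z z' : 0 <= weight e h a b z z'.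
Proof.
  unfold weight, prim_w, sec_w.
  apply Rmult_le_pos; [apply Rmult_le_pos; apply Rmax_l|apply pair_law_nonneg].
Qed.

Lemma sum_step_le F G :
  (forall a b z z', (a < K)%nat -> (b < K)%nat -> F a b z z' <= G a b z z') ->
  sum_step F <= sum_step G.
Proof.
  intros H. unfold sum_step.
  apply sumR_le; intros. apply sumR_le; intros. apply sum_bool_le; intros. apply sum_bool_le; auto.
Qed.

Lemma sum_step_ext F G :
  (forall a b z z', (a < K)%nat -> (b < K)%nat -> F a b z z' = G a b z z') ->
  sum_step F = sum_step G.
Proof. intros H. apply Rle_antisym; apply sum_step_le; intros; rewrite H; auto; lra. Qed.

Lemma sum_step_add F G :
  sum_step (fun a b z z' => F a b z z' + G a b z z') = sum_step F + sum_step G.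
Proof.
  unfold sum_step. rewrite <- sumR_add. apply sumR_ext; intros.
  rewrite <- sumR_add. apply sumR_ext; intros.
  rewrite <- sum_bool_add. apply sum_bool_ext; intros. apply sum_bool_add.
Qed.

Lemma sum_step_scal c F : sum_step (fun a b z z' => c * F a b z z') = c * sum_step F.
Proof.
  unfold sum_step. rewrite <- sumR_scal. apply sumR_ext; intros.
  rewrite <- sumR_scal. apply sumR_ext; intros.
  rewrite <- sum_bool_scal. apply sum_bool_ext; intros. apply sum_bool_scal.
Qed.

Lemma step_mean_le e h F G :
  (forall a b z z', (a < K)%nat -> (b < K)%nat -> F a b z z' <= G a b z z') ->
  step_mean e h F <= step_mean e h G.
Proof. intros H. apply sum_step_le; intros. apply Rmult_le_compat_l; auto using weight_nonneg. Qed.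

Lemma step_mean_ext e h F G :
  (forall a b z z', (a < K)%nat -> (b < K)%nat -> F a b z z' = G a b z z') ->
  step_mean e h F = step_mean e h G.
Proof. intros H. apply Rle_antisym; apply step_mean_le; intros; rewrite H; auto; lra. Qed.

Lemma step_mean_add e h F G :
  step_mean e h (fun a b z z' => F a b z z' + G a b z z') = step_mean e h F + step_mean e h G.
Proof. unfold step_mean. rewrite <- sum_step_add. apply sum_step_ext; intros; ring. Qed.

Lemma step_mean_scal e h c F :
  step_mean e h (fun a b z z' => c * F a b z z') = c * step_mean e h F.
Proof. unfold step_mean. rewrite <- sum_step_scal. apply sum_step_ext; intros; ring. Qed.

Lemma step_mean_primary e h (phi : nat -> bool -> R) :
  step_mean e h (fun a _ z _ => phi a z) =
  sumR K (fun a => prim_w h a * sum_bool (fun z => coin e a z * phi a z)).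
Proof.
  unfold step_mean, sum_step, weight. apply sumR_ext; intros a Ha.
  transitivity (sumR K (fun b => sum_bool (fun z =>
    (prim_w h a * coin e a z * phi a z) * sec_w h a (bit_loss z) b))).
  - apply sumR_ext; intros b Hb. apply sum_bool_ext; intros z.
    rewrite <- (pair_law_marginal e a b z). unfold sum_bool. ring.
  - rewrite sumR_sum_bool, <- sum_bool_scal. apply sum_bool_ext; intros z.
    rewrite sumR_scal, sec_w_sum. ring.
Qed.

Lemma step_mean_const e h c : step_mean e h (fun _ _ _ _ => c) = c.
Proof.
  rewrite (step_mean_primary e h (fun _ _ => c)).
  rewrite (sumR_ext _ _ (fun a => c * prim_w h a)), sumR_scal, prim_w_sum; [ring|].
  intros a _. unfold sum_bool. rewrite <- Rmult_plus_distr_r, coin_sum. ring.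
Qed.

Lemma step_mean_sumR e h m (F : nat -> reward) :
  step_mean e h (fun a b z z' => sumR m (fun i => F i a b z z')) =
  sumR m (fun i => step_mean e h (F i)).
Proof. induction m as [|m IH]; simpl; [apply step_mean_const|]. now rewrite step_mean_add, IH. Qed.

Lemma exp_step_mean_le e h X :
  exp (step_mean e h X) <= step_mean e h (fun a b z z' => exp (X a b z z')).
Proof.
  set (m := step_mean e h X).
  (* tangent line of exp at m *)
  apply Rle_trans with (step_mean e h (fun a b z z' => exp m * 1 + exp m * X a b z z' + - (exp m * m))).
  - rewrite !step_mean_add, !step_mean_const, step_mean_scal. fold m. lra.
  - apply step_mean_le; intros.
    replace (X a b z z') with (m + (X a b z z' - m)) at 2 by ring.
    rewrite exp_plus. pose proof (exp_ineq1_le (X a b z z' - m)). pose proof (exp_pos m). nra.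
Qed.

Lemma cum_mean_le e r r' n h :
  (forall a b z z', (a < K)%nat -> (b < K)%nat -> r a b z z' <= r' a b z z') ->
  cum_mean e r n h <= cum_mean e r' n h.
Proof.
  intros H. revert h; induction n as [|n IH]; intros h; simpl; [lra|].
  apply step_mean_le; intros. apply Rplus_le_compat; auto.
Qed.

Lemma cum_mean_affine e r r' c d n h :
  (forall h, step_mean e h r = c + d * step_mean e h r') ->
  cum_mean e r n h = INR n * c + d * cum_mean e r' n h.
Proof.
  intros H. revert h; induction n as [|n IH]; intros h; simpl cum_mean; [simpl; ring|].
  rewrite step_mean_add, H, S_INR.
  rewrite (step_mean_ext _ _ (fun a b z z' => cum_mean e r n (h ++ [observe a b z z'])) (fun a b z z' =>
    INR n * c + d * cum_mean e r' n (h ++ [observe a b z z']))) by (intros; apply IH).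
  rewrite step_mean_add, step_mean_const, step_mean_scal, (step_mean_add _ _ r'). ring.
Qed.

Lemma cum_mean_const e r c n h :
  (forall a b z z', (a < K)%nat -> (b < K)%nat -> r a b z z' = c) ->
  cum_mean e r n h = INR n * c.
Proof.
  intros H. rewrite (cum_mean_affine e r r c 0); [ring|].
  intros. rewrite (step_mean_ext _ _ _ (fun _ _ _ _ => c)) by auto. rewrite step_mean_const. ring.
Qed.

Lemma cum_mean_nonneg e r n h :
  (forall a b z z', 0 <= r a b z z') -> 0 <= cum_mean e r n h.
Proof.
  intros H. rewrite <- (Rmult_0_r (INR n)), <- (cum_mean_const e (fun _ _ _ _ => 0) 0 n h) by auto.
  apply cum_mean_le; auto.
Qed.

Lemma cum_mean_sumR e m (r : nat -> reward) n h :
  cum_mean e (fun a b z z' => sumR m (fun i => r i a b z z')) n h =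
  sumR m (fun i => cum_mean e (r i) n h).
Proof.
  revert h; induction n as [|n IH]; intros h; simpl; [rewrite sumR_const; ring|].
  rewrite <- step_mean_sumR. apply step_mean_ext; intros. now rewrite IH, sumR_add.
Qed.

Definition upd_bit (r : nat -> bool) (c : nat) (z : bool) : nat -> bool :=
  fun i => if Nat.eqb i c then z else r i.

(* Mean of [G] over the bits of arms [0 .. k-1], drawn independently from model
   [e]; the other bits are fixed to [false]. *)
Fixpoint row_mean (e : model) (k : nat) (G : (nat -> bool) -> R) : R :=
  match k with
  | O => G (fun _ => false)
  | S k' => sum_bool (fun z => coin e k' z * row_mean e k' (fun r => G (upd_bit r k' z)))
  end.

Lemma row_mean_ext e k G G' : (forall r, G r = G' r) -> row_mean e k G = row_mean e k G'.
Proof.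
  revert G G'; induction k as [|k IH]; intros G G' H; simpl; [apply H|].
  apply sum_bool_ext; intros z. f_equal. apply IH. intros; apply H.
Qed.

Lemma row_mean_add e k G G' : row_mean e k (fun r => G r + G' r) = row_mean e k G + row_mean e k G'.
Proof.
  revert G G'; induction k as [|k IH]; intros G G'; simpl; [reflexivity|].
  rewrite <- sum_bool_add. apply sum_bool_ext; intros z.
  rewrite (IH (fun r => G (upd_bit r k z)) (fun r => G' (upd_bit r k z))). ring.
Qed.

Lemma row_mean_scal e k c G : row_mean e k (fun r => c * G r) = c * row_mean e k G.
Proof.
  revert G; induction k as [|k IH]; intros G; simpl; [reflexivity|].
  rewrite <- sum_bool_scal. apply sum_bool_ext; intros z. rewrite (IH (fun r => G (upd_bit r k z))). ring.
Qed.

Lemma row_mean_const e k c : row_mean e k (fun _ => c) = c.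
Proof.
  induction k as [|k IH]; simpl; [reflexivity|].
  unfold sum_bool. rewrite IH, <- Rmult_plus_distr_r, coin_sum. ring.
Qed.

Lemma row_mean_le e k G G' : (forall r, G r <= G' r) -> row_mean e k G <= row_mean e k G'.
Proof.
  revert G G'; induction k as [|k IH]; intros G G' H; simpl; [apply H|].
  apply sum_bool_le; intros z. apply Rmult_le_compat_l; [apply coin_nonneg|]. apply IH; intros; apply H.
Qed.

Lemma row_mean_sumR e k n (F : nat -> (nat -> bool) -> R) :
  row_mean e k (fun r => sumR n (fun i => F i r)) = sumR n (fun i => row_mean e k (F i)).
Proof. induction n as [|n IH]; simpl; [apply row_mean_const|]. now rewrite row_mean_add, IH. Qed.

Lemma row_mean_pair e k g a b : (a < k)%nat -> (b < k)%nat ->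
  row_mean e k (fun r => g (r a) (r b)) =
  sum_bool (fun z => sum_bool (fun z' => pair_law e a b z z' * g z z')).
Proof.
  revert g a b; induction k as [|k IH]; intros g a b Ha Hb; [lia|]. simpl. unfold upd_bit.
  destruct (Nat.eqb_spec a k) as [->|Hak]; destruct (Nat.eqb_spec b k) as [->|Hbk].
  - rewrite (sum_bool_ext _ (fun z => coin e k z * g z z)) by (intros; now rewrite row_mean_const).
    unfold sum_bool, pair_law. rewrite Nat.eqb_refl. simpl. ring.
  - rewrite (sum_bool_ext _ (fun z => coin e k z * sum_bool (fun y => coin e b y * g z y))).
    + unfold sum_bool, pair_law. rewrite (proj2 (Nat.eqb_neq k b)) by lia. ring.
    + intros z. f_equal. rewrite (IH (fun _ y => g z y) b b) by lia.
      unfold sum_bool, pair_law. rewrite Nat.eqb_refl. simpl. ring.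
  - rewrite (sum_bool_ext _ (fun z => coin e k z * sum_bool (fun y => coin e a y * g y z))).
    + unfold sum_bool, pair_law. rewrite (proj2 (Nat.eqb_neq a k)) by lia. ring.
    + intros z. f_equal. rewrite (IH (fun y _ => g y z) a a) by lia.
      unfold sum_bool, pair_law. rewrite Nat.eqb_refl. simpl. ring.
  - rewrite (sum_bool_ext _ (fun z => coin e k z *
      sum_bool (fun z0 => sum_bool (fun z' => pair_law e a b z0 z' * g z0 z')))).
    + unfold sum_bool at 1. rewrite <- Rmult_plus_distr_r, coin_sum. ring.
    + intros z. f_equal. rewrite <- IH by lia. now apply row_mean_ext.
Qed.

Lemma sum_bool_coin_le_max e a (X : bool -> R) :
  exists z, sum_bool (fun z => coin e a z * X z) <= X z.
Proof.
  pose proof (coin_sum e a). pose proof (coin_nonneg e a true). pose proof (coin_nonneg e a false).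
  unfold sum_bool. destruct (Rle_or_lt (X true) (X false)); [exists false|exists true]; nra.
Qed.

Lemma row_mean_le_max e k G : exists r, row_mean e k G <= G r.
Proof.
  revert G; induction k as [|k IH]; intros G; simpl; [exists (fun _ => false); lra|].
  destruct (sum_bool_coin_le_max e k (fun z => row_mean e k (fun r => G (upd_bit r k z)))) as [z Hz].
  destruct (IH (fun r => G (upd_bit r k z))) as [r Hr].
  exists (upd_bit r k z). lra.
Qed.

Definition loss_table : Type := nat -> nat -> R.

Definition set_row (L : loss_table) (t : nat) (r : nat -> bool) : loss_table :=
  fun s a => if Nat.eqb s t then bit_loss (r a) else L s a.

(* Mean of [F] when rows [t .. t+n-1] of [L] are redrawn from model [e]. *)
Fixpoint table_mean (e : model) (n t : nat) (F : loss_table -> R) (L : loss_table) : R :=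
  match n with
  | O => F L
  | S n' => row_mean e K (fun r => table_mean e n' (S t) F (set_row L t r))
  end.

Definition binary_table (L : loss_table) : Prop := forall s a, L s a = 0 \/ L s a = eps.

Lemma set_row_binary L t r : binary_table L -> binary_table (set_row L t r).
Proof.
  intros HL s a. unfold set_row. destruct (Nat.eqb s t); [|apply HL].
  unfold bit_loss; destruct (r a); auto.
Qed.

Lemma table_mean_agree e n t F G L :
  (forall L', (forall s a, (s < t)%nat -> L' s a = L s a) -> F L' = G L') ->
  table_mean e n t F L = table_mean e n t G L.
Proof.
  revert t L; induction n as [|n IH]; intros t L H; simpl; [now apply H|].
  apply row_mean_ext; intros r. apply IH. intros L' HL'. apply H. intros s a Hs.
  rewrite HL' by lia. unfold set_row. destruct (Nat.eqb_spec s t); [lia|reflexivity].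
Qed.

Lemma table_mean_add e n t F G L :
  table_mean e n t (fun L => F L + G L) L = table_mean e n t F L + table_mean e n t G L.
Proof.
  revert t L; induction n as [|n IH]; intros; simpl; [reflexivity|].
  rewrite <- row_mean_add. apply row_mean_ext; intros; apply IH.
Qed.

Lemma table_mean_scal e n t c F L :
  table_mean e n t (fun L => c * F L) L = c * table_mean e n t F L.
Proof.
  revert t L; induction n as [|n IH]; intros; simpl; [reflexivity|].
  rewrite <- row_mean_scal. apply row_mean_ext; intros; apply IH.
Qed.

Lemma table_mean_const e n t c L : table_mean e n t (fun _ => c) L = c.
Proof.
  revert t L; induction n as [|n IH]; intros; simpl; [reflexivity|].
  rewrite (row_mean_ext _ _ _ (fun _ => c)) by (intros; apply IH). apply row_mean_const.
Qed.

Lemma table_mean_sumR e n t m (F : nat -> loss_table -> R) L :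
  table_mean e n t (fun L => sumR m (fun i => F i L)) L = sumR m (fun i => table_mean e n t (F i) L).
Proof. induction m as [|m IH]; simpl; [apply table_mean_const|]. now rewrite table_mean_add, IH. Qed.

Lemma table_mean_le e n t F G L : binary_table L ->
  (forall L', binary_table L' -> F L' <= G L') -> table_mean e n t F L <= table_mean e n t G L.
Proof.
  revert t L; induction n as [|n IH]; intros t L HL H; simpl; [now apply H|].
  apply row_mean_le; intros r. apply IH; auto using set_row_binary.
Qed.

Lemma table_mean_le_max e n t F L : binary_table L ->
  exists L', binary_table L' /\ table_mean e n t F L <= F L'.
Proof.
  revert t L; induction n as [|n IH]; intros t L HL; simpl; [exists L; split; [exact HL|lra]|].
  destruct (row_mean_le_max e K (fun r => table_mean e n (S t) F (set_row L t r))) as [r Hr].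
  destruct (IH (S t) (set_row L t r) (set_row_binary L t r HL)) as [L' [HL' HF]].
  exists L'. split; [exact HL'|lra].
Qed.

Lemma table_mean_entry e n t L s a : (t <= s < t + n)%nat -> (a < K)%nat ->
  table_mean e n t (fun L' => L' s a) L = coin e a true * eps.
Proof.
  revert t L; induction n as [|n IH]; intros t L Hs Ha; [lia|]. simpl.
  destruct (Nat.eq_dec s t) as [->|Hst].
  - rewrite (row_mean_ext _ _ _ (fun r => bit_loss (r a))).
    + rewrite (row_mean_pair e K (fun z _ => bit_loss z) a a) by exact Ha.
      unfold sum_bool, pair_law, bit_loss. rewrite Nat.eqb_refl. simpl. ring.
    + intros r. rewrite (table_mean_agree _ _ _ _ (fun _ => bit_loss (r a))); [apply table_mean_const|].
      intros L' HL'. rewrite HL' by lia. unfold set_row. now rewrite Nat.eqb_refl.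
  - rewrite (row_mean_ext _ _ _ (fun _ => coin e a true * eps)) by (intros; apply IH; lia).
    apply row_mean_const.
Qed.

Definition loss_reward : reward := fun _ _ z _ => bit_loss z.

(* The table is drawn independently of the play (the adversary is oblivious),
   so the two averages can be exchanged round by round. *)
Lemma table_mean_exp_loss e n t h L :
  table_mean e n t (fun L' => exp_loss_from K alg L' n t h) L = cum_mean e loss_reward n h.
Proof.
  revert t h L; induction n as [|n IH]; intros t h L; simpl; [reflexivity|].
  rewrite (row_mean_ext _ _ _ (fun r => sumR K (fun a => prim alg h a * sumR K (fun b =>
     sec alg h a (bit_loss (r a)) b *
     (bit_loss (r a) + cum_mean e loss_reward n (h ++ [observe a b (r a) (r b)])))))).
  - rewrite row_mean_sumR. unfold step_mean, sum_step. apply sumR_ext; intros a Ha.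
    rewrite row_mean_scal, row_mean_sumR, <- sumR_scal. apply sumR_ext; intros b Hb.
    rewrite (row_mean_pair e K (fun z z' => sec alg h a (bit_loss z) b *
      (bit_loss z + cum_mean e loss_reward n (h ++ [observe a b z z'])))) by assumption.
    rewrite <- sum_bool_scal. apply sum_bool_ext; intros z.
    rewrite <- sum_bool_scal. apply sum_bool_ext; intros z'.
    unfold weight, loss_reward. rewrite prim_w_eq, sec_w_eq by assumption. ring.
  - intros r. rewrite (table_mean_agree e n (S t) _ (fun L' => sumR K (fun a =>
      prim alg h a * sumR K (fun b => sec alg h a (bit_loss (r a)) b *
      (bit_loss (r a) + exp_loss_from K alg L' n (S t) (h ++ [observe a b (r a) (r b)])))))).
    + rewrite table_mean_sumR. apply sumR_ext; intros a Ha.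
      rewrite table_mean_scal, table_mean_sumR. f_equal. apply sumR_ext; intros b Hb.
      now rewrite table_mean_scal, table_mean_add, table_mean_const, IH.
    + intros L' HL'.
      assert (Hrow : forall a, L' t a = bit_loss (r a)).
      { intros a. rewrite HL' by lia. unfold set_row. now rewrite Nat.eqb_refl. }
      apply sumR_ext; intros a Ha. rewrite Hrow. f_equal.
      rewrite (sumR_ext K (fun b => sec alg h a (bit_loss (r a)) b * (bit_loss (r a) +
        exp_loss_from K alg L' n (S t) (h ++ [observe a b (r a) (r b)])))
        (fun b => bit_loss (r a) * sec alg h a (bit_loss (r a)) b + sec alg h a (bit_loss (r a)) b *
        exp_loss_from K alg L' n (S t) (h ++ [observe a b (r a) (r b)]))) by (intros; ring).
      rewrite sumR_add, sumR_scal, (proj2 (proj2 (proj2 alg_valid))), Rmult_1_r. f_equal.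
      apply sumR_ext; intros b Hb. unfold observe. now rewrite !Hrow.
Qed.

Definition pick (j : nat) : reward := fun a _ _ _ => if Nat.eqb a j then 1 else 0.
Definition seen (j : nat) : reward :=
  fun a b _ _ => if Nat.eqb a j then 1 else if Nat.eqb b j then 1 else 0.

Lemma cum_mean_loss_favored j n h :
  cum_mean (Some j) loss_reward n h = INR n * (eps / 2) - (eps * gam / 2) * cum_mean (Some j) (pick j) n h.
Proof.
  rewrite (cum_mean_affine _ _ (pick j) (eps / 2) (- (eps * gam / 2))); [ring|]. intros h'.
  unfold loss_reward, pick.
  rewrite (step_mean_primary _ _ (fun _ z => bit_loss z)).
  rewrite (step_mean_primary _ _ (fun a _ => if Nat.eqb a j then 1 else 0)).
  rewrite <- sumR_scal, (sumR_ext K _ (fun a => eps / 2 * prim_w h' a + - (eps * gam / 2) *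
    (prim_w h' a * sum_bool (fun z => coin (Some j) a z * (if Nat.eqb a j then 1 else 0))))).
  - rewrite sumR_add, sumR_scal, prim_w_sum. ring.
  - intros a _. unfold sum_bool, coin, bit_loss. destruct (Nat.eqb a j); simpl; field.
Qed.

Lemma table_mean_regret_ge j T L : (j < K)%nat -> binary_table L ->
  (eps * gam / 2) * (INR T - cum_mean (Some j) (pick j) T []) <=
  table_mean (Some j) T 0 (regret K T alg) L.
Proof.
  intros Hj HL.
  apply Rle_trans with (table_mean (Some j) T 0 (fun L => exp_loss K T alg L + (-1) * cum_loss T L j) L).
  - rewrite table_mean_add, table_mean_scal. unfold exp_loss, cum_loss.
    rewrite table_mean_exp_loss, cum_mean_loss_favored, table_mean_sumR.
    rewrite (sumR_ext _ _ (fun _ => coin (Some j) j true * eps)) by (intros; apply table_mean_entry; lia).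
    rewrite sumR_const. unfold coin. rewrite Nat.eqb_refl. right. field.
  - apply table_mean_le; [exact HL|]. intros L' _. unfold regret.
    pose proof (minR_le (K - 1) (cum_loss T L') j ltac:(lia)). lra.
Qed.

Definition step : Type := (nat * nat * bool * bool)%type.

Fixpoint path_sum (n : nat) (h : history) (Phi : list step -> R) : R :=
  match n with
  | O => Phi []
  | S n' => sum_step (fun a b z z' => path_sum n' (h ++ [observe a b z z']) (fun p => Phi ((a, b, z, z') :: p)))
  end.

Fixpoint path_prob (e : model) (h : history) (p : list step) : R :=
  match p with
  | [] => 1
  | (a, b, z, z') :: p' => weight e h a b z z' * path_prob e (h ++ [observe a b z z']) p'
  end.

Fixpoint path_reward (r : reward) (p : list step) : R :=
  match p with
  | [] => 0
  | (a, b, z, z') :: p' => r a b z z' + path_reward r p'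
  end.

Lemma path_sum_le n h F G :
  (forall p, length p = n -> F p <= G p) -> path_sum n h F <= path_sum n h G.
Proof.
  revert h F G; induction n as [|n IH]; intros h F G H; simpl; [now apply H|].
  apply sum_step_le; intros. apply IH. intros p Hp. apply H. simpl; lia.
Qed.

Lemma path_sum_ext n h F G :
  (forall p, length p = n -> F p = G p) -> path_sum n h F = path_sum n h G.
Proof. intros H. apply Rle_antisym; apply path_sum_le; intros; rewrite H; auto; lra. Qed.

Lemma path_sum_add n h F G : path_sum n h (fun p => F p + G p) = path_sum n h F + path_sum n h G.
Proof.
  revert h F G; induction n as [|n IH]; intros; simpl; [reflexivity|].
  rewrite <- sum_step_add. apply sum_step_ext; intros. apply (IH _ (fun p => F _) (fun p => G _)).
Qed.

Lemma path_sum_scal n h c F : path_sum n h (fun p => c * F p) = c * path_sum n h F.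
Proof.
  revert h F; induction n as [|n IH]; intros; simpl; [reflexivity|].
  rewrite <- sum_step_scal. apply sum_step_ext; intros. apply (IH _ (fun p => F _)).
Qed.

Lemma path_sum_nonneg n h F : (forall p, length p = n -> 0 <= F p) -> 0 <= path_sum n h F.
Proof.
  intros H. replace 0 with (path_sum n h (fun p => 0 * F p)) by (rewrite path_sum_scal; ring).
  apply path_sum_le. intros p Hp. rewrite Rmult_0_l. auto.
Qed.

Lemma path_sum_sqr_le n h x y :
  (path_sum n h (fun p => x p * y p)) ^ 2 <= path_sum n h (fun p => x p ^ 2) * path_sum n h (fun p => y p ^ 2).
Proof.
  apply sqr_le_of_quadratic_nonneg; [apply path_sum_nonneg; intros; apply pow2_ge_0|].
  intros l. rewrite <- !path_sum_scal.
  replace (path_sum n h (fun p => x p ^ 2) - path_sum n h (fun p => 2 * l * (x p * y p))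
     + path_sum n h (fun p => l ^ 2 * y p ^ 2))
    with (path_sum n h (fun p => x p ^ 2) + -1 * path_sum n h (fun p => 2 * l * (x p * y p))
     + path_sum n h (fun p => l ^ 2 * y p ^ 2)) by ring.
  rewrite <- path_sum_scal, <- !path_sum_add. apply path_sum_nonneg. intros p _.
  replace (x p ^ 2 + -1 * (2 * l * (x p * y p)) + l ^ 2 * y p ^ 2) with ((x p - l * y p) ^ 2) by ring.
  apply pow2_ge_0.
Qed.

Lemma path_prob_nonneg e h p : 0 <= path_prob e h p.
Proof.
  revert h; induction p as [|[[[a b] z] z'] p IH]; intros h; simpl; [lra|].
  apply Rmult_le_pos; auto using weight_nonneg.
Qed.

Lemma path_sum_prob e n h : path_sum n h (path_prob e h) = 1.
Proof.
  revert h; induction n as [|n IH]; intros h; simpl; [reflexivity|].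
  rewrite (sum_step_ext _ (fun a b z z' => weight e h a b z z' * 1)); [apply (step_mean_const e h 1)|].
  intros. now rewrite (path_sum_scal n _ (weight e h a b z z') (path_prob e (h ++ [observe a b z z']))), IH.
Qed.

Lemma cum_mean_path_sum e r n h : cum_mean e r n h = path_sum n h (fun p => path_prob e h p * path_reward r p).
Proof.
  revert h; induction n as [|n IH]; intros h; simpl; [ring|].
  unfold step_mean. apply sum_step_ext; intros.
  rewrite (path_sum_ext n _ _ (fun p => (weight e h a b z z' * r a b z z') * path_prob e (h ++ [observe a b z z']) p
     + weight e h a b z z' * (path_prob e (h ++ [observe a b z z']) p * path_reward r p))) by (intros; simpl; ring).
  rewrite path_sum_add, !path_sum_scal, path_sum_prob, IH. ring.
Qed.

Lemma path_reward_pick_bounds j p : 0 <= path_reward (pick j) p <= INR (length p).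
Proof.
  induction p as [|[[[a b] z] z'] p IH]; cbn [path_reward length].
  - simpl; lra.
  - rewrite S_INR. change (pick j a b z z') with (if Nat.eqb a j then 1 else 0).
    destruct (Nat.eqb a j); lra.
Qed.

Definition bit_ratio (z : bool) : R := if z then 1 - gam else 1 + gam.

Definition lik_ratio (j a b : nat) (z z' : bool) : R :=
  if Nat.eqb a j then bit_ratio z else if Nat.eqb b j then bit_ratio z' else 1.

Lemma lik_ratio_pos j a b z z' : 0 < lik_ratio j a b z z'.
Proof. unfold lik_ratio, bit_ratio. destruct (Nat.eqb a j), (Nat.eqb b j), z, z'; lra. Qed.

Lemma weight_favored j h a b z z' : weight (Some j) h a b z z' = weight None h a b z z' * lik_ratio j a b z z'.
Proof.
  unfold weight, pair_law, coin, lik_ratio, bit_ratio.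
  destruct (Nat.eqb_spec a b) as [<-|Hab].
  - destruct (Nat.eqb a j), z, z'; simpl; field.
  - destruct (Nat.eqb_spec a j), (Nat.eqb_spec b j); [lia| | |]; destruct z, z'; field.
Qed.

(* Bhattacharyya affinity of the path laws under [Some j] and [None], computed
   step by step as [sqrt] of the likelihood ratio, i.e. [exp] of half its log. *)
Fixpoint path_affinity (j : nat) (h : history) (p : list step) : R :=
  match p with
  | [] => 1
  | (a, b, z, z') :: p' =>
      weight None h a b z z' * exp (ln (lik_ratio j a b z z') / 2) * path_affinity j (h ++ [observe a b z z']) p'
  end.

Lemma exp_half_ln x : 0 < x -> exp (ln x / 2) = sqrt x.
Proof.
  intros Hx. symmetry. apply sqrt_lem_1; [lra|left; apply exp_pos|].
  rewrite <- exp_plus. replace (ln x / 2 + ln x / 2) with (ln x) by field. now apply exp_ln.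
Qed.

Lemma path_affinity_sqrt j h p : path_affinity j h p = sqrt (path_prob (Some j) h p * path_prob None h p).
Proof.
  revert h; induction p as [|[[[a b] z] z'] p IH]; intros h; simpl.
  - now rewrite Rmult_1_r, sqrt_1.
  - set (h' := h ++ [observe a b z z']).
    set (w0 := weight None h a b z z'); set (q := lik_ratio j a b z z').
    set (pj := path_prob (Some j) h' p); set (p0 := path_prob None h' p).
    assert (Hw : 0 <= w0) by apply weight_nonneg.
    assert (Hq : 0 < q) by apply lik_ratio_pos.
    assert (Hpp : 0 <= pj * p0) by (apply Rmult_le_pos; apply path_prob_nonneg).
    rewrite IH, weight_favored, exp_half_ln by exact Hq. fold w0 q pj p0.
    replace (w0 * q * pj * (w0 * p0)) with ((w0 * w0) * (q * (pj * p0))) by ring.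
    rewrite (sqrt_mult (w0 * w0)), sqrt_square, (sqrt_mult q) by nra. ring.
Qed.

Definition kappa : R := (ln (1 - gam) + ln (1 + gam)) / 4.

Lemma step_mean_half_log_ratio j h :
  step_mean None h (fun a b z z' => ln (lik_ratio j a b z z') / 2) = kappa * step_mean None h (seen j).
Proof.
  rewrite (step_mean_ext None h _ (fun a b z z' =>
      (if Nat.eqb a j then ln (bit_ratio z) / 2 else 0) +
      (if Nat.eqb a j then 0 else if Nat.eqb b j then ln (bit_ratio z') / 2 else 0))).
  2:{ intros. unfold lik_ratio. destruct (Nat.eqb a j); [ring|]. destruct (Nat.eqb b j); [ring|].
      rewrite ln_1. field. }
  rewrite (step_mean_ext None h (seen j) (fun a b z z' => (if Nat.eqb a j then 1 else 0) +
      (if Nat.eqb a j then 0 else if Nat.eqb b j then 1 else 0))).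
  2:{ intros. unfold seen. destruct (Nat.eqb a j); [ring|]. destruct (Nat.eqb b j); ring. }
  rewrite !step_mean_add, Rmult_plus_distr_l. f_equal.
  - rewrite (step_mean_primary None h (fun a z => if Nat.eqb a j then ln (bit_ratio z) / 2 else 0)).
    rewrite (step_mean_primary None h (fun a _ => if Nat.eqb a j then 1 else 0)).
    rewrite <- sumR_scal. apply sumR_ext; intros a _. unfold sum_bool, coin, kappa, bit_ratio.
    destruct (Nat.eqb a j); field.
  - unfold step_mean, sum_step. rewrite <- sumR_scal. apply sumR_ext; intros a _.
    rewrite <- sumR_scal. apply sumR_ext; intros b _. rewrite <- sum_bool_scal. apply sum_bool_ext; intros z.
    unfold sum_bool, weight, pair_law, coin, kappa, bit_ratio.
    destruct (Nat.eqb a j) eqn:Eaj; [ring|].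
    destruct (Nat.eqb b j) eqn:Ebj; [|ring].
    destruct (Nat.eqb_spec a b) as [<-|]; [congruence|field].
Qed.

(* Jensen's inequality, one step at a time. *)
Lemma affinity_ge_exp j n h :
  exp (kappa * cum_mean None (seen j) n h) <= path_sum n h (path_affinity j h).
Proof.
  revert h; induction n as [|n IH]; intros h; simpl cum_mean; simpl path_sum.
  - rewrite Rmult_0_r, exp_0. simpl; lra.
  - rewrite (sum_step_ext _ (fun a b z z' => weight None h a b z z' *
      (exp (ln (lik_ratio j a b z z') / 2) *
       path_sum n (h ++ [observe a b z z']) (path_affinity j (h ++ [observe a b z z']))))).
    2:{ intros. simpl path_affinity.
        rewrite <- (path_sum_scal n _ (exp (ln (lik_ratio j a b z z') / 2))), <- path_sum_scal.
        apply path_sum_ext. intros; ring. }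
    fold (step_mean None h (fun a b z z' => exp (ln (lik_ratio j a b z z') / 2) *
      path_sum n (h ++ [observe a b z z']) (path_affinity j (h ++ [observe a b z z'])))).
    apply Rle_trans with (step_mean None h (fun a b z z' =>
      exp (ln (lik_ratio j a b z z') / 2 + kappa * cum_mean None (seen j) n (h ++ [observe a b z z'])))).
    + eapply Rle_trans; [|apply exp_step_mean_le].
      rewrite (step_mean_add None h (fun a b z z' => ln (lik_ratio j a b z z') / 2)).
      rewrite step_mean_half_log_ratio, step_mean_scal, step_mean_add. right; f_equal; ring.
    + apply step_mean_le; intros. rewrite exp_plus.
      apply Rmult_le_compat_l; [left; apply exp_pos|apply IH].
Qed.

Lemma kappa_ge : gam ^ 2 <= 1 / 2 -> - (gam ^ 2 / 2) <= kappa.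
Proof.
  intros Hg. unfold kappa. rewrite <- ln_mult by lra.
  replace ((1 - gam) * (1 + gam)) with (1 - gam ^ 2) by ring. set (x := gam ^ 2) in *.
  assert (0 <= x) by apply pow2_ge_0.
  (* ln (1 - x) >= -2x for x <= 1/2, from exp (2x) >= 1 + 2x *)
  assert (-2 * x <= ln (1 - x)); [|lra].
  destruct (Rle_or_lt (-2 * x) (ln (1 - x))) as [H1|H1]; [exact H1|].
  apply exp_increasing in H1. rewrite exp_ln in H1 by lra.
  pose proof (exp_ineq1_le (2 * x)).
  assert (exp (-2 * x) * exp (2 * x) = 1) by (rewrite <- exp_plus, <- exp_0; f_equal; ring).
  pose proof (exp_pos (-2 * x)). nra.
Qed.

(* Cauchy-Schwarz in the form of the Hellinger bound on the change of a
   bounded statistic: with [rho] the affinity, [x = sqrt P_j - sqrt P_0] and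
   [y = (sqrt P_j + sqrt P_0) (N_j - n/2)] give [sum x y = D],
   [sum x^2 = 2 - 2 rho] and [sum y^2 <= (n/2)^2 (2 + 2 rho)]. *)
Lemma pick_shift_sqr_le j n h :
  let rho := path_sum n h (path_affinity j h) in
  (cum_mean (Some j) (pick j) n h - cum_mean None (pick j) n h) ^ 2 <= INR n ^ 2 * ((1 - rho) * (1 + rho)).
Proof.
  intros rho.
  set (s1 := fun p => sqrt (path_prob (Some j) h p)); set (s2 := fun p => sqrt (path_prob None h p)).
  assert (E1 : forall p, s1 p * s1 p = path_prob (Some j) h p) by (intros; apply sqrt_sqrt, path_prob_nonneg).
  assert (E2 : forall p, s2 p * s2 p = path_prob None h p) by (intros; apply sqrt_sqrt, path_prob_nonneg).
  assert (E3 : forall p, s1 p * s2 p = path_affinity j h p).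
  { intros. rewrite path_affinity_sqrt. unfold s1, s2. rewrite sqrt_mult; auto using path_prob_nonneg. }
  set (nn := INR n); set (f := path_reward (pick j)).
  set (x := fun p => s1 p - s2 p); set (y := fun p => (s1 p + s2 p) * (f p - nn / 2)).
  assert (Hxx : path_sum n h (fun p => x p ^ 2) = 2 - 2 * rho).
  { rewrite (path_sum_ext n h _ (fun p => path_prob (Some j) h p + path_prob None h p + (-2) * path_affinity j h p)).
    - rewrite !path_sum_add, path_sum_scal, !path_sum_prob. unfold rho. ring.
    - intros. unfold x. rewrite <- E1, <- E2, <- E3. ring. }
  assert (Hxy : path_sum n h (fun p => x p * y p) = cum_mean (Some j) (pick j) n h - cum_mean None (pick j) n h).
  { rewrite !cum_mean_path_sum.
    rewrite (path_sum_ext n h _ (fun p => path_prob (Some j) h p * f p + (-1) * (path_prob None h p * f p) +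
       (- (nn / 2)) * path_prob (Some j) h p + (nn / 2) * path_prob None h p)).
    - rewrite !path_sum_add, !path_sum_scal, !path_sum_prob. unfold f. ring.
    - intros. unfold x, y. rewrite <- E1, <- E2. ring. }
  assert (Hyy : path_sum n h (fun p => y p ^ 2) <= (nn / 2) ^ 2 * (2 + 2 * rho)).
  { apply Rle_trans with (path_sum n h (fun p =>
      (nn / 2) ^ 2 * (path_prob (Some j) h p + path_prob None h p + 2 * path_affinity j h p))).
    - apply path_sum_le. intros p Hp. unfold y. rewrite <- E1, <- E2, <- E3.
      pose proof (path_reward_pick_bounds j p) as Hf. fold f in Hf. rewrite Hp in Hf. fold nn in Hf.
      assert ((f p - nn / 2) ^ 2 <= (nn / 2) ^ 2) by nra.
      replace (((s1 p + s2 p) * (f p - nn / 2)) ^ 2) with ((s1 p + s2 p) ^ 2 * (f p - nn / 2) ^ 2) by ring.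
      replace ((nn / 2) ^ 2 * (s1 p * s1 p + s2 p * s2 p + 2 * (s1 p * s2 p)))
        with ((s1 p + s2 p) ^ 2 * (nn / 2) ^ 2) by ring.
      apply Rmult_le_compat_l; [apply pow2_ge_0|assumption].
    - rewrite path_sum_scal, !path_sum_add, path_sum_scal, !path_sum_prob. unfold rho. right; ring. }
  assert (Hx0 : 0 <= 2 - 2 * rho) by (rewrite <- Hxx; apply path_sum_nonneg; intros; apply pow2_ge_0).
  pose proof (path_sum_sqr_le n h x y) as HCS. rewrite Hxx, Hxy in HCS.
  eapply Rle_trans; [exact HCS|].
  apply Rle_trans with ((2 - 2 * rho) * ((nn / 2) ^ 2 * (2 + 2 * rho))); [now apply Rmult_le_compat_l|].
  right. unfold nn. field.
Qed.

Lemma pick_shift_le j n h : gam ^ 2 <= 1 / 2 ->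
  cum_mean (Some j) (pick j) n h <= cum_mean None (pick j) n h + INR n * gam * sqrt (cum_mean None (seen j) n h).
Proof.
  intros Hg.
  set (m := cum_mean None (seen j) n h).
  assert (HO : 0 <= m).
  { apply cum_mean_nonneg. intros; unfold seen. destruct (Nat.eqb a j); [lra|]. destruct (Nat.eqb b j); lra. }
  pose proof (pick_shift_sqr_le j n h) as Hsqr; simpl in Hsqr.
  set (rho := path_sum n h (path_affinity j h)) in Hsqr.
  set (D := cum_mean (Some j) (pick j) n h - cum_mean None (pick j) n h) in Hsqr.
  (* 1 - rho <= - kappa m <= gam^2/2 m, using 1 + u <= exp u *)
  assert (Hrho : 1 - rho <= gam ^ 2 / 2 * m).
  { pose proof (affinity_ge_exp j n h) as He. fold m rho in He.
    pose proof (exp_ineq1_le (kappa * m)). pose proof (kappa_ge Hg). nra. }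
  assert (Hn : 0 <= INR n * gam) by (apply Rmult_le_pos; [apply pos_INR|lra]).
  assert (D ^ 2 <= (INR n * gam * sqrt m) ^ 2).
  { replace ((INR n * gam * sqrt m) ^ 2) with (INR n ^ 2 * gam ^ 2 * (sqrt m * sqrt m)) by ring.
    rewrite sqrt_sqrt by exact HO.
    eapply Rle_trans; [exact Hsqr|].
    assert (0 <= INR n ^ 2) by apply pow2_ge_0.
    assert ((1 - rho) * (1 + rho) <= 2 * (1 - rho)) by (pose proof (pow2_ge_0 (1 - rho)); nra).
    nra. }
  assert (0 <= INR n * gam * sqrt m) by (apply Rmult_le_pos; [exact Hn|apply sqrt_pos]).
  unfold D in *. nra.
Qed.

Lemma sum_pick_uniform n h : sumR K (fun j => cum_mean None (pick j) n h) = INR n.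
Proof.
  rewrite <- cum_mean_sumR, (cum_mean_const _ _ 1); [ring|].
  intros a b z z' Ha _. unfold pick.
  rewrite (sumR_ext _ _ (fun i => if Nat.eqb i a then 1 else 0)) by (intros; now rewrite Nat.eqb_sym).
  now apply sumR_indicator.
Qed.

Lemma sum_see_uniform_le n h : sumR K (fun j => cum_mean None (seen j) n h) <= 2 * INR n.
Proof.
  rewrite <- cum_mean_sumR, Rmult_comm, <- (cum_mean_const None (fun _ _ _ _ => 2) 2 n h) by auto.
  apply cum_mean_le. intros a b z z' Ha Hb.
  apply Rle_trans with (sumR K (fun i => (if Nat.eqb i a then 1 else 0) + (if Nat.eqb i b then 1 else 0))).
  - apply sumR_le. intros. unfold seen. rewrite (Nat.eqb_sym a i), (Nat.eqb_sym b i).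
    destruct (Nat.eqb i a), (Nat.eqb i b); lra.
  - rewrite sumR_add, !sumR_indicator by assumption. lra.
Qed.

Lemma sum_pick_favored_le n : gam ^ 2 <= 1 / 2 ->
  sumR K (fun j => cum_mean (Some j) (pick j) n []) <= INR n + INR n * gam * sqrt (2 * INR K * INR n).
Proof.
  intros Hg.
  apply Rle_trans with (sumR K (fun j =>
    cum_mean None (pick j) n [] + INR n * gam * sqrt (cum_mean None (seen j) n []))).
  { apply sumR_le. intros. now apply pick_shift_le. }
  rewrite sumR_add, sum_pick_uniform, sumR_scal. apply Rplus_le_compat_l.
  apply Rmult_le_compat_l; [apply Rmult_le_pos; [apply pos_INR|lra]|].
  set (s := sumR K (fun j => sqrt (cum_mean None (seen j) n []))).
  assert (Hs : 0 <= s) by (apply sumR_nonneg; intros; apply sqrt_pos).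
  assert (Hs2 : s ^ 2 <= 2 * INR K * INR n).
  { eapply Rle_trans; [apply sumR_sqr_le|].
    rewrite (sumR_ext _ _ (fun j => cum_mean None (seen j) n [])).
    - pose proof (sum_see_uniform_le n []). pose proof (pos_INR K). nra.
    - intros j _. rewrite <- Rsqr_pow2, Rsqr_sqrt; [reflexivity|].
      apply cum_mean_nonneg. intros; unfold seen. destruct (Nat.eqb _ j); [lra|]. destruct (Nat.eqb _ j); lra. }
  rewrite <- (sqrt_pow2 s Hs). now apply sqrt_le_1_alt.
Qed.

Lemma exists_table_regret_ge T : (0 < K)%nat -> gam ^ 2 <= 1 / 2 ->
  exists L, binary_table L /\
    (eps * gam / 2) * (INR T - (INR T + INR T * gam * sqrt (2 * INR K * INR T)) / INR K) <= regret K T alg L.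
Proof.
  intros HK Hg.
  set (B := (eps * gam / 2) * (INR T - (INR T + INR T * gam * sqrt (2 * INR K * INR T)) / INR K)).
  assert (H0 : binary_table (fun _ _ => 0)) by (intros s a; now left).
  assert (Hsum : INR K * B <= sumR K (fun j => table_mean (Some j) T 0 (regret K T alg) (fun _ _ => 0))).
  { apply Rle_trans with (sumR K (fun j => (eps * gam / 2) * (INR T - cum_mean (Some j) (pick j) T []))).
    - rewrite (sumR_ext _ _ (fun j =>
        (eps * gam / 2) * INR T + (- (eps * gam / 2)) * cum_mean (Some j) (pick j) T [])) by (intros; ring).
      rewrite sumR_add, sumR_const, sumR_scal.
      pose proof (sum_pick_favored_le T Hg).
      assert (0 < INR K) by (apply lt_0_INR; exact HK).
      assert (0 <= eps * gam / 2) by (apply Rmult_le_pos; [apply Rmult_le_pos|]; lra).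
      replace (INR K * B) with
        ((eps * gam / 2) * (INR K * INR T - (INR T + INR T * gam * sqrt (2 * INR K * INR T))))
        by (unfold B; field; lra).
      nra.
    - apply sumR_le. intros. now apply table_mean_regret_ge. }
  destruct (sumR_exists_ge _ _ _ HK Hsum) as [j [_ Hj]].
  destruct (table_mean_le_max (Some j) T 0 (regret K T alg) _ H0) as [L [HL HR]].
  exists L. split; [exact HL|lra].
Qed.

End Game.

Lemma binary_table_losses_in_01 K T eps L :
  0 <= eps <= 1 -> binary_table eps L -> losses_in_01 K T L.
Proof. intros Heps HL s a _ _. destruct (HL s a) as [-> | ->]; lra. Qed.

Lemma binary_table_eff_range K T eps L :
  0 <= eps -> binary_table eps L -> eff_range_le K T L eps.
Proof.
  intros Heps HL s a a' _ _ _.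
  destruct (HL s a) as [-> | ->], (HL s a') as [-> | ->];
    unfold Rabs; destruct (Rcase_abs _); lra.
Qed.

Lemma tuned_gamma_sqr k t : 0 <= k -> 0 < t -> (sqrt (k * t) / (6 * t)) ^ 2 = k / (36 * t).
Proof.
  intros Hk Ht. unfold Rdiv. rewrite Rpow_mult_distr, pow2_sqrt by nra. field. lra.
Qed.

(* With [gam = sqrt (k t) / (6 t)] the bound is [eps sqrt (k t) (1 - 1/k - sqrt 2 / 6) / 12],
   and [1 - 1/2 - sqrt 2 / 6 > 0.24]. *)
Lemma tuned_bound_ge k t eps : 2 <= k -> 0 < t -> 0 < eps ->
  let gam := sqrt (k * t) / (6 * t) in
  2 / 100 * eps * sqrt (k * t) <= (eps * gam / 2) * (t - (t + t * gam * sqrt (2 * k * t)) / k).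
Proof.
  intros Hk Ht Heps gam. unfold gam.
  set (s := sqrt (k * t)).
  assert (Hss : s * s = k * t) by (apply sqrt_sqrt; nra).
  assert (Hs : 0 < s) by (apply sqrt_lt_R0; nra).
  assert (Hsq2 : sqrt 2 <= 1.415).
  { rewrite <- (sqrt_square 1.415) by lra. apply sqrt_le_1_alt. lra. }
  assert (E : sqrt (2 * k * t) = sqrt 2 * s) by (unfold s; rewrite <- sqrt_mult by nra; f_equal; ring).
  rewrite E.
  replace ((eps * (s / (6 * t)) / 2) * (t - (t + t * (s / (6 * t)) * (sqrt 2 * s)) / k))
    with (eps * s * ((k - 1 - sqrt 2 * (s * s) / (6 * t)) / (12 * k))) by (field; lra).
  rewrite Hss.
  replace (2 / 100 * eps * s) with (eps * s * (2 / 100)) by ring.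
  apply Rmult_le_compat_l; [nra|].
  apply Rmult_le_reg_r with (12 * k); [lra|].
  replace ((k - 1 - sqrt 2 * (k * t) / (6 * t)) / (12 * k) * (12 * k)) with (k - 1 - sqrt 2 * k / 6) by (field; lra).
  nra.
Qed.

Theorem theorem2 (K T : nat) (eps : R) :
  (2 <= K)%nat -> 0 < eps <= 1 -> 3 * INR K / 32 <= INR T ->
  forall alg : algorithm, valid_algorithm K alg ->
  exists L : nat -> nat -> R,
    losses_in_01 K T L /\ eff_range_le K T L eps /\
    regret K T alg L >= 2 / 100 * eps * sqrt (INR K * INR T).
Proof.
  intros HK Heps HT alg Hval.
  assert (Hk : 2 <= INR K) by (replace 2 with (INR 2) by (simpl; lra); now apply le_INR).
  assert (Ht : 0 < INR T) by lra.
  set (gam := sqrt (INR K * INR T) / (6 * INR T)).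
  assert (Hgam0 : 0 <= gam) by (apply Rmult_le_pos; [apply sqrt_pos|apply Rlt_le, Rinv_0_lt_compat; lra]).
  assert (Hgam2 : gam ^ 2 <= 1 / 2).
  { unfold gam. rewrite tuned_gamma_sqr by lra.
    apply Rmult_le_reg_r with (36 * INR T); [lra|]. field_simplify; lra. }
  destruct (exists_table_regret_ge K alg eps gam Hval ltac:(lra) ltac:(nra) T ltac:(lia) Hgam2) as [L [HL HR]].
  exists L. split; [|split].
  - apply binary_table_losses_in_01 with eps; [lra|exact HL].
  - apply binary_table_eff_range; [lra|exact HL].
  - apply Rle_ge. eapply Rle_trans; [|exact HR]. apply tuned_bound_ge; lra.
Qed.
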